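(* Let $B$ be a board and $S$ a set of sinks such that every region of $B$ contains a sink, and let $T$ be a minimum-weight arborescence (converging to the root $r$) of the extended large tilt graph $\hat G_L(B,S)$. If $(p_1,q_1)$ and $(p_2,q_2)$ are two distinct inverse edges in $T$ whose heads $q_1$ and $q_2$ lie in the same row segment $R$, then at most one of the tails $p_1,p_2$ lies in $R$.
   Context: Pixels are unit squares indexed by $\mathbb{Z}^2$. A board $B=(V,E)$ is a finite subgraph of the square grid graph on $\mathbb{Z}^2$; regions are its connected components; its boundary consists of pixel sides not shared with a neighbouring pixel joined by an edge of $E$. $S\subseteq V$ are sinks. For a pixel $p$, its row (column) segment is the maximal set of pixels reachable from $p$ using only horizontal (vertical) edges of $E$; $p^\ell,p^r$ are the leftmost/rightmost pixels of its row segment and $p^u,p^d$ the topmost/bottommost pixels of its column segment. The full tilt graph $G_F(B)$ has vertex set $V$ and edges $(p,p^x)$ for $x\in\{\ell,r,u,d\}$, $p^x\ne p$. A corner pixel is a pixel $p$ with $p=p^x=p^y$ for some $x\in\{\ell,r\}$, $y\in\{u,d\}$. The large tilt graph $G_L(B,S)$ is the subgraph of $G_F(B)$ induced by the vertex set consisting of (i) all pixels reachable in $G_F(B)$ from corner pixels, (ii) every sink $s$ and $s^\ell,s^r,s^u,s^d$, (iii) for every reflex corner of the boundary, the endpoints of the row and column segments of the pixels incident to that corner, (iv) all pixels on the intersection of a row segment and a column segment each containing a pixel included in (i)–(iii). Extended graph: for a directed graph $G$ with sinks $S$, $\hat G$ has vertex set $V(G)\cup\{r\}$ with new root $r$ and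 edges: every edge of $G$ with weight $0$; for every edge $(p,q)$ of $G$ such that $(q,p)$ is not an edge of $G$, the inverse edge $(q,p)$ with weight $1$; and $(s,r)$ with weight $0$ for each $s\in S$. An arborescence converging to $r$ is a spanning subgraph in which every vertex other than $r$ has exactly one outgoing edge and a directed path to $r$; its weight is the sum of its edge weights. *)

From HB Require Import structures.
From mathcomp Require Import all_boot all_order all_algebra.
Set Implicit Arguments. Unset Strict Implicit. Unset Printing Implicit Defensive.
Import Order.TTheory GRing.Theory Num.Theory.

(* Pixels are indexed by Z^2: pixel (x,y) is the unit square [x,x+1]x[y,y+1].
   "up" means increasing y. *)
Definition pixel := (int * int)%type.

Local Open Scope ring_scope.

Definition grid_adj (p q : pixel) : bool :=
  ((p.1 == q.1) && (`|p.2 - q.2| == 1)) || ((p.2 == q.2) && (`|p.1 - q.1| == 1)).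

Definition is_board (V : seq pixel) (E : rel pixel) : Prop :=
  (forall p q, E p q -> [/\ p \in V, q \in V & grid_adj p q]) /\
  (forall p q, E p q = E q p).

(* lattice points touching a pixel, and pixels around a lattice point (in cyclic order) *)
Definition pix_corners (p : pixel) : seq pixel :=
  [:: p; (p.1 + 1, p.2); (p.1 + 1, p.2 + 1); (p.1, p.2 + 1)].
Definition quads (v : pixel) : seq pixel :=
  [:: (v.1 - 1, v.2 - 1); (v.1, v.2 - 1); (v.1, v.2); (v.1 - 1, v.2)].

Local Close Scope ring_scope.

Section Board.
Variables (V : seq pixel) (E : rel pixel).
Local Notation pix := (seq_sub V).

Definition Erel (a b : pix) : bool := E (val a) (val b).
Definition hedge (a b : pix) : bool := E (val a) (val b) && ((val a).2 == (val b).2).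
Definition vedge (a b : pix) : bool := E (val a) (val b) && ((val a).1 == (val b).1).

Definition rowseg (a b : pix) : bool := connect hedge a b.
Definition colseg (a b : pix) : bool := connect vedge a b.

Definition isLeft (a b : pix) : bool :=
  rowseg a b && [forall c, rowseg a c ==> ((val b).1 <= (val c).1)%R].
Definition isRight (a b : pix) : bool :=
  rowseg a b && [forall c, rowseg a c ==> ((val c).1 <= (val b).1)%R].
Definition isUp (a b : pix) : bool :=
  colseg a b && [forall c, colseg a c ==> ((val c).2 <= (val b).2)%R].
Definition isDown (a b : pix) : bool :=
  colseg a b && [forall c, colseg a c ==> ((val b).2 <= (val c).2)%R].

Definition endpoint (a b : pix) : bool :=
  [|| isLeft a b, isRight a b, isUp a b | isDown a b].

Definition tilt (a b : pix) : bool := (a != b) && endpoint a b.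

Definition corner_pixel (a : pix) : bool :=
  (isLeft a a || isRight a a) && (isUp a a || isDown a a).

Definition bside (p q : pixel) : bool := ((p \in V) || (q \in V)) && ~~ E p q.

(* reflex corner of the boundary at lattice point v: three consecutive
   quadrants around v are pixels of B joined by edges (interior angle >= 270
   degrees) and at least one boundary side is incident to v. *)
Definition reflex (v : pixel) : bool :=
  let Q k := nth (0%R, 0%R) (quads v) (k %% 4) in
  [exists k : 'I_4,
    [&& Q k \in V, Q k.+1 \in V, Q k.+2 \in V, E (Q k) (Q k.+1),
        E (Q k.+1) (Q k.+2) &
        bside (Q k.+2) (Q k.+3) || bside (Q k.+3) (Q k)]].

Section Sinks.
Variable S : {set pix}.

Definition VL1 (a : pix) : bool := [exists c, corner_pixel c && connect tilt c a].
Definition VL2 (a : pix) : bool := [exists s in S, (s == a) || endpoint s a].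
Definition VL3 (a : pix) : bool :=
  [exists p : pix, has reflex (pix_corners (val p)) && endpoint p a].
Definition VLbase (a : pix) : bool := [|| VL1 a, VL2 a | VL3 a].
Definition VL4 (a : pix) : bool :=
  [exists b1, exists b2, [&& VLbase b1, VLbase b2, rowseg b1 a & colseg b2 a]].
Definition VL (a : pix) : bool := VLbase a || VL4 a.

Definition tiltL (a b : pix) : bool := [&& VL a, VL b & tilt a b].
Definition invL (a b : pix) : bool := tiltL b a && ~~ tiltL a b.

(* extended graph: vertices Some a (a in VL) and the root None *)
Definition ext_edge (u w : option pix) : bool :=
  match u, w with
  | Some a, Some b => tiltL a b || invL a b
  | Some a, None => a \in S
  | None, _ => false
  end.
Definition ext_weight (u w : option pix) : nat :=
  match u, w with
  | Some a, Some b => nat_of_bool (invL a b)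
  | _, _ => 0
  end.

(* an arborescence converging to the root, given by the unique outgoing edge
   (a, f a) of each non-root vertex a *)
Definition tstep (f : pix -> option pix) (u : option pix) : option pix :=
  if u is Some a then f a else None.
Definition is_arborescence (f : pix -> option pix) : Prop :=
  forall a, VL a ->
    ext_edge (Some a) (f a) /\ exists n, iter n (tstep f) (Some a) = None.
Definition arb_weight (f : pix -> option pix) : nat :=
  \sum_(a | VL a) ext_weight (Some a) (f a).
Definition min_arborescence (f : pix -> option pix) : Prop :=
  is_arborescence f /\
  forall g, is_arborescence g -> arb_weight f <= arb_weight g.

End Sinks.

Definition every_region_has_sink (S : {set pix}) : Prop :=
  forall a : pix, exists2 s, s \in S & connect Erel a s.

End Board.

From mathcomp Require Import all_boot all_order all_algebra.
Set Implicit Arguments. Unset Strict Implicit. Unset Printing Implicit Defensive.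
Import Order.TTheory GRing.Theory Num.Theory.

(* If the tails p1, p2 both lay in the row segment R of the heads, then, as
   tilt targets inside R, each would be an end of R, so G_L contains both tilt
   edges (p1, p2) and (p2, p1).  Replacing the inverse edge leaving p1 by
   (p1, p2), or the one leaving p2 by (p2, p1), lowers the weight by one; the
   first swap yields an arborescence unless the T-path from p2 passes through
   p1, the second unless the T-path from p1 passes through p2, and both cannot
   happen since T is acyclic. *)

Lemma connect_invariant (T : finType) (U : eqType) (e : rel T) (g : T -> U) :
  (forall x y, e x y -> g x = g y) -> forall x y, connect e x y -> g x = g y.
Proof.
move=> eg x _ /connectP[s es ->].
by elim: s x es => //= z s IH x /andP[/eg -> /IH].
Qed.

Section RowSegments.
Variables (V : seq pixel) (E : rel pixel).
Hypothesis E_sym : forall p q, E p q = E q p.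
Local Notation pix := (seq_sub V).

Lemma rowseg_y (a b : pix) : rowseg E a b -> (val a).2 = (val b).2.
Proof.
by apply: (connect_invariant (g := fun c : pix => (val c).2)) => x y /andP[_ /eqP].
Qed.

Lemma colseg_x (a b : pix) : colseg E a b -> (val a).1 = (val b).1.
Proof.
by apply: (connect_invariant (g := fun c : pix => (val c).1)) => x y /andP[_ /eqP].
Qed.

Lemma rowseg_sym : connect_sym (@hedge V E).
Proof. by apply: sym_connect_sym => a b; rewrite /hedge E_sym eq_sym. Qed.

Lemma same_rowseg (a c : pix) : rowseg E a c -> rowseg E c =1 rowseg E a.
Proof. by move=> ac b; rewrite /rowseg (same_connect rowseg_sym ac). Qed.

Lemma isLeft_rowseg (a c : pix) : rowseg E a c -> isLeft E c =1 isLeft E a.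
Proof.
move=> ac b; rewrite /isLeft (same_rowseg ac); congr (_ && _).
by apply: eq_forallb => x; rewrite (same_rowseg ac).
Qed.

Lemma isRight_rowseg (a c : pix) : rowseg E a c -> isRight E c =1 isRight E a.
Proof.
move=> ac b; rewrite /isRight (same_rowseg ac); congr (_ && _).
by apply: eq_forallb => x; rewrite (same_rowseg ac).
Qed.

Lemma pix_eq (a b : pix) : (val a).1 = (val b).1 -> (val a).2 = (val b).2 -> a = b.
Proof.
move=> e1 e2; apply: val_inj.
by rewrite [val a]surjective_pairing [val b]surjective_pairing e1 e2.
Qed.

(* A column endpoint lying in the row segment of q is q itself. *)
Lemma tilt_rowseg_end (q p : pix) :
  tilt E q p -> rowseg E q p -> isLeft E q p || isRight E q p.
Proof.
case/andP=> /eqP qp /or4P[-> | -> | /andP[c _] | /andP[c _]] r; rewrite ?orbT //;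
  by case: qp; apply: pix_eq; [exact: colseg_x c | exact: rowseg_y r].
Qed.

Lemma tilt_row_end (q a b : pix) : a != b -> rowseg E q a ->
  isLeft E q b || isRight E q b -> tilt E a b.
Proof.
move=> ab qa qb; rewrite /tilt ab /endpoint.
by rewrite (isLeft_rowseg qa) (isRight_rowseg qa); case/orP: qb => ->; rewrite ?orbT.
Qed.

End RowSegments.

Section Redirection.
Variables (V : seq pixel) (E : rel pixel) (S : {set seq_sub V}).
Local Notation pix := (seq_sub V).
Implicit Types (f : pix -> option pix) (a b p q : pix).

Definition reaches f a b : Prop := exists k, iter k (tstep f) (Some a) = Some b.

Lemma iter_tstep_None f n : iter n (tstep f) None = None.
Proof. by elim: n => //= n ->. Qed.

Lemma reachesP f a b n : iter n (tstep f) (Some a) = None ->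
  reflect (reaches f a b) [exists k : 'I_n, iter k (tstep f) (Some a) == Some b].
Proof.
move=> hn; apply: (iffP existsP) => [[k /eqP]|[k hk]]; first by exists k.
have kn : k < n.
  rewrite ltnNge; apply/negP => /subnK nk.
  by move: hk; rewrite -nk iterD hn iter_tstep_None.
by exists (Ordinal kn); rewrite hk.
Qed.

Lemma arborescence_acyclic f a b : is_arborescence E S f -> VL E S a -> a != b ->
  reaches f b a -> reaches f a b -> False.
Proof.
move=> hf va ab [k hk] [j hj].
have cyc t : iter (t * (k + j)) (tstep f) (Some a) = Some a.
  by elim: t => // t IH; rewrite mulSn iterD IH iterD hj hk.
have [n hn] := (hf a va).2.
case: k hk cyc => [[ba]|k _ cyc]; first by rewrite ba eqxx in ab.
have nle : n <= n * (k.+1 + j) by rewrite leq_pmulr // addSn.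
by move: (cyc n); rewrite -(subnK nle) iterD hn iter_tstep_None.
Qed.

Lemma tiltL_VLr a b : tiltL E S a b -> VL E S b.
Proof. by case/and3P. Qed.

Lemma invL_tilt a b : invL E S a b -> tilt E b a.
Proof. by case/andP=> /and3P[]. Qed.

Definition redirect f p p' : pix -> option pix :=
  fun a => if a == p then Some p' else f a.

Lemma iter_redirect f p p' n (x : option pix) :
  (forall k, k < n -> iter k (tstep f) x != Some p) ->
  iter n (tstep (redirect f p p')) x = iter n (tstep f) x.
Proof.
elim: n => // n IH hk; rewrite !iterS IH => [|k kn]; last exact/hk/ltnW.
move: (hk n (ltnSn n)); case: (iter n (tstep f) x) => [a|] //= ap.
by rewrite /redirect ifN //; apply: contra ap => /eqP ->.
Qed.

(* A vertex whose f-path meets p first walks to p, then to p', and from p'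
   along f, which by assumption never returns to p. *)
Lemma redirect_arborescence f p p' : is_arborescence E S f ->
  tiltL E S p p' -> ~ reaches f p' p -> is_arborescence E S (redirect f p p').
Proof.
move=> hf pp' p'p a va; split.
  by rewrite /redirect; case: eqP => [->|_]; [rewrite /= pp' | case: (hf a va)].
have [n hn] := (hf a va).2.
have [m hm] := (hf p' (tiltL_VLr pp')).2.
have p'_avoids k : iter k (tstep f) (Some p') != Some p.
  by apply/eqP => hk; apply: p'p; exists k.
case: (reachesP p hn) => [[k0 hk0]|a_avoids]; last first.
  exists n; rewrite iter_redirect // => k _; apply/eqP => hk.
  by apply: a_avoids; exists k.
have hit : exists k, iter k (tstep f) (Some a) == Some p by exists k0; rewrite hk0.
have [k /eqP hk kmin] := ex_minnP hit.
have to_p : iter k (tstep (redirect f p p')) (Some a) = Some p.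
  rewrite iter_redirect // => j jk; apply/negP => /kmin.
  by rewrite leqNgt jk.
exists (m + k.+1); rewrite iterD iterS to_p /= {2}/redirect eqxx.
by rewrite iter_redirect // => j _; exact: p'_avoids.
Qed.

Lemma arb_weight_redirect f p q p' : VL E S p -> f p = Some q ->
  invL E S p q -> tiltL E S p p' ->
  (arb_weight E S (redirect f p p')).+1 = arb_weight E S f.
Proof.
move=> vp fp pq pp'; rewrite /arb_weight (bigD1 p vp) [RHS](bigD1 p vp) /=.
rewrite /redirect eqxx fp pq /invL pp' andbF add0n add1n; congr _.+1.
by apply: eq_bigr => a /andP[_ /negbTE ->].
Qed.

Lemma min_arborescence_reaches f p q p' : min_arborescence E S f ->
  VL E S p -> f p = Some q -> invL E S p q -> tiltL E S p p' -> reaches f p' p.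
Proof.
move=> [hf fmin] vp fp pq pp'.
have [m hm] := (hf p' (tiltL_VLr pp')).2.
case: (reachesP p hm) => // p'_avoids.
have := fmin _ (redirect_arborescence hf pp' p'_avoids).
by rewrite -(arb_weight_redirect vp fp pq pp') ltnn.
Qed.

End Redirection.

Theorem mainTheorem6 (V : seq pixel) (E : rel pixel) (S : {set seq_sub V})
    (T : seq_sub V -> option (seq_sub V)) :
  is_board V E ->
  every_region_has_sink E S ->
  min_arborescence E S T ->
  forall p1 q1 p2 q2 : seq_sub V,
    VL E S p1 -> VL E S p2 ->
    T p1 = Some q1 -> T p2 = Some q2 ->
    invL E S p1 q1 -> invL E S p2 q2 ->
    p1 != p2 ->
    rowseg E q1 q2 ->
    ~~ (rowseg E q1 p1 && rowseg E q1 p2).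
Proof.
(* The sink hypothesis only ensures that an arborescence exists. *)
move=> [_ E_sym] _ Tmin p1 q1 p2 q2 v1 v2 T1 T2 i1 i2 p12 q12.
apply/negP => /andP[r1 r2].
have e1 : isLeft E q1 p1 || isRight E q1 p1 := tilt_rowseg_end (invL_tilt i1) r1.
have e2 : isLeft E q1 p2 || isRight E q1 p2.
  rewrite -(isLeft_rowseg E_sym q12) -(isRight_rowseg E_sym q12).
  by apply: tilt_rowseg_end (invL_tilt i2) _; rewrite (same_rowseg E_sym q12).
have t12 : tiltL E S p1 p2 by rewrite /tiltL v1 v2 (tilt_row_end E_sym p12 r1 e2).
have t21 : tiltL E S p2 p1.
  by rewrite /tiltL v1 v2 (tilt_row_end E_sym _ r2 e1) // eq_sym.
apply: (arborescence_acyclic Tmin.1 v1 p12).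
- exact: min_arborescence_reaches Tmin v1 T1 i1 t12.
- exact: min_arborescence_reaches Tmin v2 T2 i2 t21.
Qed.
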